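(* With $T=\mathcal{P}_{\mathsf{ufs}}$, $FX=1+\mathbb{A}\times X+[\mathbb{A}]X$ and $GX=2\times X^{\mathbb{A}}\times[\mathbb{A}]X$, the natural transformation $\varepsilon\colon TF\to GT$ given by $\varepsilon_X(S)=(b,\,a\mapsto S_a,\,S_{\mathord{|}a})$, where $b=1$ iff $*\in S$, $S_a=\{s:(a,s)\in S\}$ and $S_{\mathord{|}a}=\langle a\rangle\{s:\langle a\rangle s\in S\}$ for $a$ fresh for $S$, is an extension natural transformation, i.e. it satisfies $\varepsilon\cdot\mu F\cdot T\lambda=G\mu\cdot\varepsilon T$ and $\varepsilon\cdot\mu F=G\mu\cdot\rho T\cdot T\varepsilon$.
   Context: Fix a countably infinite set $\mathbb{A}$ of names; $\mathsf{Nom}$ is the category of nominal sets and equivariant maps; $1=\{*\}$, $2=\{0,1\}$. $[\mathbb{A}]X=(\mathbb{A}\times X)/\sim$, $(a,x)\sim(b,y)$ iff $(a\,c)\cdot x=(b\,c)\cdot y$ for fresh $c$, classes $\langle a\rangle x$. $T=\mathcal{P}_{\mathsf{ufs}}$ is the monad of uniformly finitely supported subsets (subsets $A$ with $\bigcup_{x\in A}\mathrm{supp}(x)$ finite), with unit $\eta$ singleton and multiplication $\mu$ union. $\lambda\colon FT\to TF$ is the distributive law $\lambda_X( * )=\{*\}$, $\lambda_X(a,S)=\{(a,x):x\in S\}$, $\lambda_X(\langle a\rangle S)=\{\langle a\rangle s:s\in S\}$. $\rho\colon TG\to GT$ is the distributive law of the canonical lifting of $G$: with product projections $p_0,p_1,p_2$,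 $\rho_X(S)=(b,\,a\mapsto\{f(a):f\in p_1[S]\},\,\langle a\rangle\{s:\langle a\rangle s\in p_2[S]\})$ where $b=1$ iff $1\in p_0[S]$ and $a$ is fresh for $p_2[S]$. *)

From Stdlib Require Import Arith List Lia ClassicalEpsilon.
Import ListNotations.


Record perm := Perm {
  pf : nat -> nat;
  pinv : nat -> nat;
  pf_pinv : forall a, pf (pinv a) = a;
  pinv_pf : forall a, pinv (pf a) = a;
  pf_fin : exists n, forall a, n <= a -> pf a = a }.

Lemma pid_fin : exists n, forall a : nat, n <= a -> a = a.
Proof. exists 0; auto. Qed.
Definition pid : perm :=
  @Perm (fun a => a) (fun a => a) (fun a => eq_refl) (fun a => eq_refl) pid_fin.

Section Comp.
Variables p q : perm.
Lemma pcomp_1 a : pf p (pf q (pinv q (pinv p a))) = a.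
Proof. rewrite pf_pinv, pf_pinv; reflexivity. Qed.
Lemma pcomp_2 a : pinv q (pinv p (pf p (pf q a))) = a.
Proof. rewrite pinv_pf, pinv_pf; reflexivity. Qed.
Lemma pcomp_3 : exists n, forall a, n <= a -> pf p (pf q a) = a.
Proof.
  destruct (pf_fin p) as [n Hn]; destruct (pf_fin q) as [m Hm].
  exists (max n m); intros a Ha; rewrite Hm by lia; apply Hn; lia.
Qed.
Lemma pinverse_fin : exists n, forall a, n <= a -> pinv p a = a.
Proof.
  destruct (pf_fin p) as [n Hn]; exists n; intros a Ha.
  rewrite <- (Hn a Ha) at 1; apply pinv_pf.
Qed.
End Comp.

Definition pcomp (p q : perm) : perm :=
  @Perm (fun a => pf p (pf q a)) (fun a => pinv q (pinv p a))
        (pcomp_1 p q) (pcomp_2 p q) (pcomp_3 p q).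

Definition pinverse (p : perm) : perm :=
  @Perm (pinv p) (pf p) (pinv_pf p) (pf_pinv p) (pinverse_fin p).

Definition swapf (a b c : nat) : nat :=
  if Nat.eqb c a then b else if Nat.eqb c b then a else c.
Lemma swapf_inv a b c : swapf a b (swapf a b c) = c.
Proof.
  unfold swapf.
  destruct (Nat.eqb_spec c a); destruct (Nat.eqb_spec c b); subst;
  repeat (first [destruct (Nat.eqb_spec _ _) | idtac]); simpl in *; subst; try lia;
  repeat match goal with |- context [Nat.eqb ?x ?y] => destruct (Nat.eqb_spec x y) end;
  subst; lia.
Qed.
Lemma swapf_fin a b : exists n, forall c, n <= c -> swapf a b c = c.
Proof.
  exists (S (max a b)); intros c Hc; unfold swapf.
  destruct (Nat.eqb_spec c a); [lia|]; destruct (Nat.eqb_spec c b); [lia|]; reflexivity.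
Qed.
Definition swap (a b : nat) : perm :=
  @Perm (swapf a b) (swapf a b) (swapf_inv a b) (swapf_inv a b) (swapf_fin a b).

Record pset := PSet { pcar :> Type; pact : perm -> pcar -> pcar }.

Definition supports (X : pset) (L : list nat) (x : X) : Prop :=
  forall p : perm, (forall a, In a L -> pf p a = a) -> pact X p x = x.

(** a is in the (least) support of x: a belongs to every finite support *)
Definition supp (X : pset) (x : X) (a : nat) : Prop :=
  forall L, supports X L x -> In a L.

Definition fresh (X : pset) (a : nat) (x : X) : Prop := ~ supp X x a.

Record nominal := Nominal {
  nset :> pset;
  act_id : forall x : nset, pact nset pid x = x;
  act_comp : forall p q (x : nset), pact nset (pcomp p q) x = pact nset p (pact nset q x);
  act_fin : forall x : nset, exists L, supports nset L x }.

(** * Constructions on perm-sets (raw carriers; the nominal sets of the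
      paper are the subsets described by the [in...] predicates below) *)
Definition pUnit : pset := @PSet unit (fun _ x => x).
Definition pBool : pset := @PSet bool (fun _ x => x).
Definition pAtom : pset := @PSet nat (fun p a => pf p a).
Definition pProd (X Y : pset) : pset :=
  @PSet (X * Y)%type (fun p xy => (pact X p (fst xy), pact Y p (snd xy))).
Definition pSum (X Y : pset) : pset :=
  @PSet (X + Y)%type (fun p s => match s with
                                  | inl x => inl (pact X p x)
                                  | inr y => inr (pact Y p y) end).
Definition pExp (X : pset) : pset :=
  @PSet (nat -> X) (fun p f a => pact X p (f (pinv p a))).
Definition pT (X : pset) : pset :=
  @PSet (X -> Prop) (fun p A y => A (pact X (pinverse p) y)).

Definition ufs (X : pset) (A : X -> Prop) : Prop :=
  exists L : list nat, forall x, A x -> forall a, supp X x a -> In a L.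

(** name abstraction: <a>x is the ~-class of (a,x), where
    (a,x) ~ (b,y) iff (a c).x = (b c).y for c fresh (for a, b, x, y) *)
Definition abs (X : pset) (a : nat) (x : X) : nat * X -> Prop :=
  fun bz => exists c, c <> a /\ c <> fst bz /\ fresh X c x /\ fresh X c (snd bz) /\
            pact X (swap a c) x = pact X (swap (fst bz) c) (snd bz).
Definition pAbs (X : pset) : pset :=
  @PSet (nat * X -> Prop)
        (fun p P bz => P (pinv p (fst bz), pact X (pinverse p) (snd bz))).

Definition pF (X : pset) : pset := pSum pUnit (pSum (pProd pAtom X) (pAbs X)).
Definition pG (X : pset) : pset := pProd (pProd pBool (pExp X)) (pAbs X).

Definition inT (X : pset) (inX : X -> Prop) (A : pT X) : Prop :=
  ufs X A /\ forall x, A x -> inX x.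
Definition inAbs (X : pset) (inX : X -> Prop) (P : pAbs X) : Prop :=
  exists a x, inX x /\ P = abs X a x.
Definition inF (X : pset) (inX : X -> Prop) (u : pF X) : Prop :=
  match u with
  | inl _ => True
  | inr (inl ax) => inX (snd ax)
  | inr (inr P) => inAbs X inX P
  end.
Definition allX (X : pset) (x : X) : Prop := True.

Definition pbool (P : Prop) : bool :=
  if excluded_middle_informative P then true else false.

Definition choose_fresh (X : pset) (x : X) : nat :=
  epsilon (inhabits 0) (fun a => fresh X a x).

Definition mu (X : pset) (SS : pT (pT X)) : pT X :=
  fun x => exists A, SS A /\ A x.
Definition Tmap (X Y : pset) (f : X -> Y) (S : pT X) : pT Y :=
  fun y => exists x, S x /\ y = f x.

Definition absmap (X Y : pset) (f : X -> Y) (P : pAbs X) : pAbs Y :=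
  fun z => exists a x, P = abs X a x /\ abs Y a (f x) z.
Definition Gmap (X Y : pset) (f : X -> Y) (g : pG X) : pG Y :=
  ((fst (fst g), fun a => f (snd (fst g) a)), absmap X Y f (snd g)).

Definition lam (X : pset) (u : pF (pT X)) : pT (pF X) :=
  match u with
  | inl _ => fun z => z = inl tt
  | inr (inl aS) => fun z => exists x, snd aS x /\ z = inr (inl (fst aS, x))
  | inr (inr P) => fun z => exists a (S : pT X) s,
                     P = abs (pT X) a S /\ S s /\ z = inr (inr (abs X a s))
  end.

Definition rho (X : pset) (S : pT (pG X)) : pG (pT X) :=
  let p2S : pT (pAbs X) := fun P => exists g, S g /\ P = snd g in
  let a := choose_fresh (pT (pAbs X)) p2S in
  ((pbool (exists g, S g /\ fst (fst g) = true),
    fun b => fun y => exists g, S g /\ y = snd (fst g) b),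
   abs (pT X) a (fun s => p2S (abs X a s))).

Definition eps (X : pset) (S : pT (pF X)) : pG (pT X) :=
  let a := choose_fresh (pT (pF X)) S in
  ((pbool (S (inl tt)), fun b => fun s => S (inr (inl (b, s)))),
   abs (pT X) a (fun s => S (inr (inr (abs X a s))))).

(** Both laws are equalities of triples [(b, a ↦ S_a, S_{|a})] and are checked
    componentwise; the first two components are plain unions. For the third,
    [S_{|a} = <a>{s | <a>s ∈ S}] does not depend on the name [a] as long as it is
    fresh for [S], so on both sides one may use the same name [d] outside a common
    finite support, which uniform finite support of [S] provides. Then
    [[A]μ (<d>W) = <d>(μ W)] by equivariance of [μ], and it remains to compare
    sets of the form [{s | <d>s ∈ …}]: an abstraction [<a>A] in [S] with [<a>s' = <d>s]
    is rewritten as [<d>((a d)·A)], which contains [s]. *)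

From Stdlib Require Import Arith List Lia ClassicalEpsilon Classical
  FunctionalExtensionality PropExtensionality ProofIrrelevance.

Implicit Types Y : pset.

(** * Permutations and actions *)

Lemma perm_ext (p q : perm) : (forall a, pf p a = pf q a) -> p = q.
Proof.
  destruct p as [f g fg gf ffin], q as [f' g' fg' gf' ffin']; simpl; intros E.
  assert (f = f') as <- by (apply functional_extensionality; exact E).
  assert (g = g') as <-.
  { apply functional_extensionality; intro a. rewrite <- (fg' a) at 1. apply gf. }
  f_equal; apply proof_irrelevance.
Qed.

Lemma pf_inj (p : perm) a b : pf p a = pf p b -> a = b.
Proof. intro E. rewrite <- (pinv_pf p a), <- (pinv_pf p b), E. reflexivity. Qed.

Lemma pinv_fix (p : perm) a : pf p a = a -> pinv p a = a.
Proof. intro H. rewrite <- H at 1. apply pinv_pf. Qed.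

Ltac swap_cases :=
  unfold swapf; repeat (match goal with
    | |- context [Nat.eqb ?x ?y] => destruct (Nat.eqb_spec x y)
    | H : context [Nat.eqb ?x ?y] |- _ => destruct (Nat.eqb_spec x y) end);
  repeat match goal with H : pf ?p ?x = pf ?p ?y |- _ => apply pf_inj in H end;
  subst; try reflexivity; try congruence; try lia.

Lemma swapf_l a b : swapf a b a = b.
Proof. swap_cases. Qed.

Lemma swapf_r a b : swapf a b b = a.
Proof. swap_cases. Qed.

Lemma swap_refl a : swap a a = pid.
Proof. apply perm_ext; intro; simpl; swap_cases. Qed.

Lemma pinverse_pid : pinverse pid = pid.
Proof. apply perm_ext; reflexivity. Qed.

Lemma pinverse_pcomp (p q : perm) : pinverse (pcomp p q) = pcomp (pinverse q) (pinverse p).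
Proof. apply perm_ext; reflexivity. Qed.

Lemma pinverse_swap a b : pinverse (swap a b) = swap a b.
Proof. apply perm_ext; reflexivity. Qed.

Lemma pinverse_inv (p : perm) : pinverse (pinverse p) = p.
Proof. apply perm_ext; reflexivity. Qed.

Lemma swap_conj (p : perm) a c : pcomp (swap (pf p a) (pf p c)) p = pcomp p (swap a c).
Proof. apply perm_ext; intro; simpl; swap_cases. Qed.

Lemma notin_ex (K : list nat) : exists c, ~ In c K.
Proof.
  assert (B : exists c, forall a, In a K -> a < c).
  { induction K as [|k K [c Hc]]; [exists 0; simpl; tauto|].
    exists (S (max k c)). intros a [<-|H]; [|specialize (Hc a H)]; lia. }
  destruct B as [c Hc]. exists c. intro H. specialize (Hc c H). lia.
Qed.

Definition is_action Y : Prop :=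
  (forall x, pact Y pid x = x) /\
  (forall p q x, pact Y (pcomp p q) x = pact Y p (pact Y q x)).

Lemma is_action_nom (X : nominal) : is_action X.
Proof. split; [apply act_id | apply act_comp]. Qed.

Lemma is_action_T Y : is_action Y -> is_action (pT Y).
Proof.
  intros [h1 h2]; split; intros; apply functional_extensionality; intro y; simpl.
  - now rewrite pinverse_pid, h1.
  - now rewrite pinverse_pcomp, h2.
Qed.

Lemma is_action_Abs Y : is_action Y -> is_action (pAbs Y).
Proof.
  intros [h1 h2]; split; intros; apply functional_extensionality; intros [c y]; simpl.
  - now rewrite pinverse_pid, h1.
  - now rewrite pinverse_pcomp, h2.
Qed.

Lemma is_action_F Y : is_action Y -> is_action (pF Y).
Proof.
  intros HY. destruct (is_action_Abs Y HY) as [a1 a2]. destruct HY as [h1 h2].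
  split; intros; destruct x as [[]|[[n y]|P]]; try reflexivity;
    cbn -[pAbs]; now rewrite ?h1, ?h2, ?a1, ?a2.
Qed.

Section Action.
Variable Y : pset.
Hypothesis HY : is_action Y.

Lemma act_inv_l p (x : Y) : pact Y (pinverse p) (pact Y p x) = x.
Proof.
  rewrite <- (proj2 HY). replace (pcomp (pinverse p) p) with pid; [apply HY|].
  apply perm_ext; intro; symmetry; apply pinv_pf.
Qed.

Lemma act_inv_r p (x : Y) : pact Y p (pact Y (pinverse p) x) = x.
Proof.
  rewrite <- (proj2 HY). replace (pcomp p (pinverse p)) with pid; [apply HY|].
  apply perm_ext; intro; symmetry; apply pf_pinv.
Qed.

Lemma act_swap2 a b (x : Y) : pact Y (swap a b) (pact Y (swap a b) x) = x.
Proof. rewrite <- (pinverse_swap a b) at 1. apply act_inv_l. Qed.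

Lemma act_inj p (x y : Y) : pact Y p x = pact Y p y -> x = y.
Proof. intro E. now rewrite <- (act_inv_l p x), <- (act_inv_l p y), E. Qed.

End Action.

(** * Supports and freshness *)

Definition fs Y (x : Y) : Prop := exists K, supports Y K x.

Lemma fresh_of Y K (x : Y) c : supports Y K x -> ~ In c K -> fresh Y c x.
Proof. intros S N H. apply N, H, S. Qed.

Lemma fresh_ex Y (x : Y) c : fresh Y c x -> exists K, supports Y K x /\ ~ In c K.
Proof.
  intro H. apply not_all_ex_not in H. destruct H as [K HK].
  apply imply_to_and in HK. exists K; exact HK.
Qed.

Lemma fresh_fs Y (x : Y) c : fresh Y c x -> fs Y x.
Proof. intro H. destruct (fresh_ex _ _ _ H) as [K [HK _]]. exists K; auto. Qed.

Lemma swap_fix Y K (x : Y) a b :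
  supports Y K x -> ~ In a K -> ~ In b K -> pact Y (swap a b) x = x.
Proof.
  intros S Ha Hb. apply S. intros c Hc. simpl.
  assert (c <> a) by congruence. assert (c <> b) by congruence. swap_cases.
Qed.

Section Freshness.
Variable Y : pset.
Hypothesis HY : is_action Y.

(** [(a b) = (a c)(b c)(a c)] for [c] outside supports witnessing the
    freshness of [a] and [b]. *)
Lemma fresh_swap (x : Y) a b : fresh Y a x -> fresh Y b x -> pact Y (swap a b) x = x.
Proof.
  intros Fa Fb. destruct (Nat.eq_dec a b) as [<-|Hab]; [rewrite swap_refl; apply HY|].
  destruct (fresh_ex _ _ _ Fa) as [K1 [S1 N1]], (fresh_ex _ _ _ Fb) as [K2 [S2 N2]].
  destruct (notin_ex (a :: b :: K1 ++ K2)) as [c Hc].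
  rewrite !not_in_cons, in_app_iff in Hc.
  replace (swap a b) with (pcomp (swap a c) (pcomp (swap b c) (swap a c)))
    by (apply perm_ext; intro; simpl; swap_cases).
  rewrite !(proj2 HY), (swap_fix Y K1 x a c), (swap_fix Y K2 x b c),
    (swap_fix Y K1 x a c); tauto.
Qed.

(** Induction on a bound beyond which [p] is the identity: [(N (p N)) p] has
    a smaller bound and still fixes [L]. *)
Lemma supports_of_swaps L (x : Y) :
  (forall a b, ~ In a L -> ~ In b L -> pact Y (swap a b) x = x) -> supports Y L x.
Proof.
  intros Hsw.
  assert (Ind : forall N p, (forall c, N <= c -> pf p c = c) ->
            (forall c, In c L -> pf p c = c) -> pact Y p x = x).
  { induction N as [|N IH]; intros p Hbound HL.
    - replace p with pid by (apply perm_ext; intro; symmetry; apply Hbound; lia).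
      apply HY.
    - set (b := pf p N).
      destruct (Nat.eq_dec b N) as [E|NE].
      { apply IH; auto. intros c Hc.
        destruct (Nat.eq_dec c N) as [->|]; auto. apply Hbound; lia. }
      set (q := pcomp (swap N b) p).
      assert (Fix : forall c, pf p c = c -> pf q c = c).
      { intros c Hc. simpl. rewrite Hc.
        assert (c <> N) by (intros ->; apply NE; exact Hc).
        assert (c <> b) by (intros ->; apply NE, (pf_inj p); rewrite Hc; reflexivity).
        swap_cases. }
      assert (HqN : pf q N = N) by (simpl; apply swapf_r).
      replace p with (pcomp (swap N b) q)
        by (apply perm_ext; intro; simpl; apply swapf_inv).
      rewrite (proj2 HY), IH.
      + apply Hsw; intro H; apply NE.
        * unfold b; rewrite HL; auto.
        * apply (pf_inj p). fold b. now rewrite HL.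
      + intros c Hc. destruct (Nat.eq_dec c N) as [->|]; auto. apply Fix, Hbound; lia.
      + auto. }
  intros p Hp. destruct (pf_fin p) as [N HN]. apply (Ind N); auto.
Qed.

Lemma supp_supports (x : Y) L :
  (forall a, supp Y x a -> In a L) -> supports Y L x.
Proof.
  intros HL. apply supports_of_swaps.
  intros a b Ha Hb. apply fresh_swap; intro H; auto.
Qed.

Lemma supports_act K (x : Y) p : supports Y K x -> supports Y (map (pf p) K) (pact Y p x).
Proof.
  intros S r Hr. rewrite <- (proj2 HY).
  replace (pcomp r p) with (pcomp p (pcomp (pinverse p) (pcomp r p)))
    by (apply perm_ext; intro; simpl; apply pf_pinv).
  rewrite (proj2 HY p), S; [reflexivity|].
  intros a Ha. simpl. rewrite Hr by (apply in_map; auto). apply pinv_pf.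
Qed.

Lemma fs_act (x : Y) p : fs Y x -> fs Y (pact Y p x).
Proof. intros [K HK]. exists (map (pf p) K). apply supports_act; auto. Qed.

Lemma fresh_act (x : Y) p a : fresh Y a x -> fresh Y (pf p a) (pact Y p x).
Proof.
  intros F. destruct (fresh_ex _ _ _ F) as [K [HK NK]].
  apply (fresh_of _ (map (pf p) K)); [apply supports_act; auto|].
  intros H. apply in_map_iff in H as [b [E Hb]]. apply pf_inj in E. congruence.
Qed.

Lemma supp_act (x : Y) p a : supp Y x a -> supp Y (pact Y p x) (pf p a).
Proof.
  intros H K HK. apply (supports_act _ _ (pinverse p)) in HK.
  rewrite act_inv_l in HK by auto.
  apply H, in_map_iff in HK as [b [E Hb]]. simpl in E. subst. now rewrite pf_pinv.
Qed.

End Freshness.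

(** * Uniformly finitely supported subsets *)

Section Subsets.
Variable Y : pset.
Hypothesis HY : is_action Y.

Lemma supports_T_mem K (A : pT Y) p :
  supports (pT Y) K A -> (forall a, In a K -> pf p a = a) -> forall y, A (pact Y p y) <-> A y.
Proof.
  intros S Hp y.
  assert (E : pact (pT Y) (pinverse p) A = A).
  { apply S. intros a Ha. simpl. apply pinv_fix, Hp; auto. }
  apply (f_equal (fun B : pT Y => B y)) in E. simpl in E.
  rewrite pinverse_inv in E. rewrite E. tauto.
Qed.

Lemma supports_T L (A : pT Y) : (forall x, A x -> supports Y L x) -> supports (pT Y) L A.
Proof.
  intros H p Hp. apply functional_extensionality; intro y. apply propositional_extensionality.
  simpl. split; intro Hy.
  - rewrite <- (act_inv_r Y HY p y), (H _ Hy); auto.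
  - rewrite (H y Hy (pinverse p)); auto. intros a Ha; simpl; apply pinv_fix, Hp; auto.
Qed.

Lemma ufs_supports (A : pT Y) : ufs Y A -> exists L, forall x, A x -> supports Y L x.
Proof. intros [L HL]. exists L. intros x Ax. exact (supp_supports Y HY x L (HL x Ax)). Qed.

Lemma ufs_fs (A : pT Y) : ufs Y A -> fs (pT Y) A.
Proof. intro U. destruct (ufs_supports A U) as [L HL]. exists L. apply supports_T; auto. Qed.

(** A name outside a support of [A] but in the support of an element [x] of [A]
    could be swapped with any fresh name, giving elements of [A] with unboundedly
    many different names in their supports. *)
Lemma elem_supports (A : pT Y) K x : ufs Y A -> supports (pT Y) K A -> A x -> supports Y K x.
Proof.
  intros [L HL] S Ax. apply supp_supports; auto. intros a Ha. apply NNPP; intro Na.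
  destruct (notin_ex (a :: K ++ L)) as [b Hb]. rewrite not_in_cons, in_app_iff in Hb.
  assert (Ax' : A (pact Y (swap a b) x)).
  { apply (supports_T_mem K A (swap a b) S); auto.
    intros c Hc; simpl. assert (c <> a) by congruence. assert (c <> b) by (intros ->; tauto).
    swap_cases. }
  apply Hb. right. apply (HL _ Ax').
  pose proof (supp_act Y HY x (swap a b) a Ha) as Hab. simpl in Hab.
  rewrite swapf_l in Hab. exact Hab.
Qed.

Lemma ufs_act (A : pT Y) p : ufs Y A -> ufs Y (pact (pT Y) p A).
Proof.
  intros [L HL]. exists (map (pf p) L). intros y Hy b Hb. simpl in Hy.
  apply (supp_act Y HY _ (pinverse p)) in Hb.
  apply in_map_iff. exists (pinv p b); split; [apply pf_pinv | apply (HL _ Hy _ Hb)].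
Qed.

End Subsets.

(** * Name abstraction *)

Section Abstraction.
Variable Y : pset.
Hypothesis HY : is_action Y.

Lemma abs_refl (x : Y) a : fs Y x -> abs Y a x (a, x).
Proof.
  intros [K HK]. destruct (notin_ex (a :: K)) as [c Hc]. simpl in Hc.
  exists c; simpl. assert (fresh Y c x) by (apply (fresh_of _ K); auto).
  repeat split; auto; intros ->; tauto.
Qed.

Lemma abs_sym (x z : Y) a b : abs Y a x (b, z) -> abs Y b z (a, x).
Proof. intros [c [H1 [H2 [H3 [H4 H5]]]]]; exists c; simpl in *; auto 10. Qed.

Lemma abs_witness (x z : Y) a b c c' :
  pact Y (swap a c) x = pact Y (swap b c) z -> c <> a -> c <> b -> fresh Y c x -> fresh Y c z ->
  c' <> a -> c' <> b -> fresh Y c' x -> fresh Y c' z ->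
  pact Y (swap a c') x = pact Y (swap b c') z.
Proof.
  intros E ca cb fx fz c'a c'b fx' fz'. destruct (Nat.eq_dec c c') as [<-|ne]; auto.
  apply (f_equal (pact Y (swap c c'))) in E. rewrite <- !(proj2 HY) in E.
  assert (Conj : forall d, d <> c -> d <> c' ->
             pcomp (swap c c') (swap d c) = pcomp (swap d c') (swap c c')).
  { intros d H1 H2. apply perm_ext; intro; simpl; swap_cases. }
  rewrite !Conj, !(proj2 HY), (fresh_swap Y HY x c c'), (fresh_swap Y HY z c c') in E; auto.
Qed.

Lemma abs_trans (x y z : Y) a b d : abs Y a x (b, y) -> abs Y b y (d, z) -> abs Y a x (d, z).
Proof.
  intros [c1 [H1 [H2 [H3 [H4 H5]]]]] [c2 [G1 [G2 [G3 [G4 G5]]]]]; simpl in *.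
  destruct (fresh_ex _ _ _ H3) as [Kx [Hx _]], (fresh_ex _ _ _ H4) as [Ky [Hy _]],
    (fresh_ex _ _ _ G4) as [Kz [Hz _]].
  destruct (notin_ex (a :: b :: d :: Kx ++ Ky ++ Kz)) as [e He].
  rewrite !not_in_cons, !in_app_iff in He.
  assert (fresh Y e x) by (apply (fresh_of _ Kx); tauto).
  assert (fresh Y e y) by (apply (fresh_of _ Ky); tauto).
  assert (fresh Y e z) by (apply (fresh_of _ Kz); tauto).
  exists e; simpl. repeat split; try tauto.
  rewrite (abs_witness x y a b c1 e); auto; try tauto.
  apply (abs_witness y z b d c2 e); auto; tauto.
Qed.

Lemma abs_eq (x z : Y) a b : abs Y a x (b, z) -> abs Y a x = abs Y b z.
Proof.
  intro R. apply functional_extensionality; intros [d w].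
  apply propositional_extensionality; split; intro H.
  - apply (abs_trans _ x _ _ a); auto. apply abs_sym; auto.
  - apply (abs_trans _ z _ _ b); auto.
Qed.

Lemma abs_eq_inv (x z : Y) a b : abs Y a x = abs Y b z -> fs Y z -> abs Y a x (b, z).
Proof. intros E F. rewrite E. apply abs_refl; auto. Qed.

Lemma abs_inj (x y : Y) a : abs Y a x = abs Y a y -> fs Y y -> x = y.
Proof.
  intros E F. destruct (abs_eq_inv x y a a E F) as [c [_ [_ [_ [_ H]]]]].
  apply (act_inj Y HY _ _ _ H).
Qed.

Lemma abs_rename (x : Y) a c : fresh Y c x -> abs Y a x = abs Y c (pact Y (swap a c) x).
Proof.
  intro F. destruct (Nat.eq_dec c a) as [->|ne].
  { rewrite swap_refl, (proj1 HY). reflexivity. }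
  apply abs_eq. destruct (fresh_ex _ _ _ F) as [K [HK Nc]].
  destruct (notin_ex (a :: c :: K ++ map (pf (swap a c)) K)) as [d Hd].
  rewrite !not_in_cons, in_app_iff in Hd.
  exists d; simpl. repeat split; try tauto.
  - apply (fresh_of _ K); tauto.
  - apply (fresh_of _ (map (pf (swap a c)) K)); [apply supports_act|]; tauto.
  - rewrite <- (proj2 HY).
    replace (pcomp (swap c d) (swap a c)) with (pcomp (swap a d) (swap c d))
      by (apply perm_ext; intro; simpl; swap_cases).
    rewrite (proj2 HY), (swap_fix Y K x c d); tauto.
Qed.

Lemma abs_rel_act (x z : Y) a b p :
  abs Y a x (b, z) -> abs Y (pf p a) (pact Y p x) (pf p b, pact Y p z).
Proof.
  intros [c [H1 [H2 [H3 [H4 H5]]]]]; simpl in *.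
  exists (pf p c); simpl. repeat split.
  - intro E; apply pf_inj in E; auto.
  - intro E; apply pf_inj in E; auto.
  - apply fresh_act; auto.
  - apply fresh_act; auto.
  - rewrite <- !(proj2 HY), !swap_conj, !(proj2 HY), H5. reflexivity.
Qed.

Lemma abs_act (x : Y) a p : pact (pAbs Y) p (abs Y a x) = abs Y (pf p a) (pact Y p x).
Proof.
  apply functional_extensionality; intros [b z]. apply propositional_extensionality.
  simpl; split; intro H.
  - apply (abs_rel_act _ _ _ _ p) in H. rewrite pf_pinv, act_inv_r in H; auto.
  - apply (abs_rel_act _ _ _ _ (pinverse p)) in H. simpl in H.
    rewrite pinv_pf, act_inv_l in H; auto.
Qed.

Lemma abs_supports_inv (x : Y) a K :
  supports (pAbs Y) K (abs Y a x) -> fs Y x -> supports Y (a :: K) x.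
Proof.
  intros S F p Hp. assert (E := S p (fun b Hb => Hp b (or_intror Hb))).
  rewrite abs_act, (Hp a (or_introl eq_refl)) in E. apply abs_inj in E; auto.
Qed.

(** If [p] moves [a], then [b := p a] is fresh for [x] and [p] agrees with
    [(a b)] on [a :: K]. *)
Lemma abs_supports (x : Y) a K : supports Y (a :: K) x -> supports (pAbs Y) K (abs Y a x).
Proof.
  intros S p Hp. rewrite abs_act.
  destruct (Nat.eq_dec (pf p a) a) as [Ea|Na].
  - rewrite Ea, S; [reflexivity|]. intros k [<-|Hk]; auto.
  - set (b := pf p a) in *.
    assert (Nb : ~ In b (a :: K)).
    { intros [Hb|Hb]; [congruence|]. apply Na, (pf_inj p). rewrite (Hp b Hb); auto. }
    rewrite (abs_rename x a b) by (apply (fresh_of _ (a :: K)); auto).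
    f_equal. apply (act_inj Y HY (swap a b)). rewrite act_swap2, <- (proj2 HY) by auto.
    apply S. intros k [<-|Hk]; simpl.
    + apply swapf_r.
    + rewrite Hp by auto.
      assert (k <> a) by (intros ->; apply Na, Hp, Hk).
      assert (k <> b) by (intros ->; apply Nb; right; exact Hk).
      swap_cases.
Qed.

End Abstraction.

Lemma abs_ufs X (HX : is_action X) (A A0 : pT X) a a0 :
  ufs X A0 -> abs (pT X) a A = abs (pT X) a0 A0 -> ufs X A.
Proof.
  intros U0 E. assert (HT := is_action_T X HX).
  destruct (abs_eq_inv _ _ _ _ _ E (ufs_fs X HX A0 U0)) as [c [_ [_ [_ [_ Ec]]]]].
  cbn [fst snd] in Ec. replace A with (pact (pT X) (swap a c) (pact (pT X) (swap a0 c) A0))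
    by (rewrite <- Ec; apply act_swap2; auto).
  apply ufs_act, ufs_act; auto.
Qed.

(** * Equivariant maps *)

Definition equivariant Y Y' (f : Y -> Y') : Prop :=
  forall p y, f (pact Y p y) = pact Y' p (f y).

Section Equivariant.
Variables Y Y' : pset.
Variable f : Y -> Y'.
Hypothesis Hf : equivariant Y Y' f.

Lemma supports_equivariant K x : supports Y K x -> supports Y' K (f x).
Proof. intros S p Hp. rewrite <- Hf, S; auto. Qed.

Lemma fresh_equivariant c x : fresh Y c x -> fresh Y' c (f x).
Proof.
  intros F. destruct (fresh_ex _ _ _ F) as [K [HK NK]].
  apply (fresh_of _ K); [apply supports_equivariant|]; auto.
Qed.

Lemma absmap_abs (HY : is_action Y) (HY' : is_action Y') a x :
  fs Y x -> absmap Y Y' f (abs Y a x) = abs Y' a (f x).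
Proof.
  intro F. apply functional_extensionality; intro z. apply propositional_extensionality.
  split; [|intro H; exists a, x; auto].
  intros [b [x' [E H]]]. enough (abs Y' b (f x') = abs Y' a (f x)) as <- by exact H.
  destruct (abs_eq_inv Y _ _ _ _ (eq_sym E) F) as [c [cb [ca [Fx' [Fx Ec]]]]].
  cbn [fst snd] in *.
  rewrite (abs_rename Y' HY' (f x') b c), (abs_rename Y' HY' (f x) a c)
    by (apply fresh_equivariant; auto).
  now rewrite <- !Hf, Ec.
Qed.

End Equivariant.

Lemma mu_equivariant X (HX : is_action X) : equivariant (pT (pT X)) (pT X) (mu X).
Proof.
  intros p W. apply functional_extensionality; intro s. apply propositional_extensionality.
  unfold mu. cbn [pact pT]. split.
  - intros [A [HA As]]. exists (pact (pT X) (pinverse p) A). split; [exact HA|].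
    change (A (pact X (pinverse (pinverse p)) (pact X (pinverse p) s))).
    now rewrite pinverse_inv, act_inv_r.
  - intros [A [HA As]]. exists (pact (pT X) p A). split; [|exact As].
    change (W (pact (pT X) (pinverse p) (pact (pT X) p A))).
    now rewrite act_inv_l by (apply is_action_T; auto).
Qed.

(** * Concretion *)

(** [<c>(conc j Z c)] is the paper's [Z_{|c}]; [j] embeds [[A]Y] into the type of
    the elements of [Z] ([F_abs] for [eps], the identity for [rho]). *)
Definition conc Y Y' (j : pAbs Y -> Y') (Z : pT Y') (c : nat) : pT Y :=
  fun s => Z (j (abs Y c s)).

Definition F_abs Y : pAbs Y -> pF Y := fun P => inr (inr P).

Section Concretion.
Variables Y Y' : pset.
Hypotheses (HY : is_action Y) (HY' : is_action Y').
Variable j : pAbs Y -> Y'.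
Hypothesis Hj : equivariant (pAbs Y) Y' j.

Lemma conc_act (Z : pT Y') c p :
  pact (pT Y) p (conc Y Y' j Z c) = conc Y Y' j (pact (pT Y') p Z) (pf p c).
Proof.
  apply functional_extensionality; intro s. unfold conc; simpl.
  rewrite <- Hj, abs_act by auto. simpl. now rewrite pinv_pf.
Qed.

Lemma conc_supports (Z : pT Y') K c :
  supports (pT Y') K Z -> supports (pT Y) (c :: K) (conc Y Y' j Z c).
Proof.
  intros S p Hp. rewrite conc_act, S, Hp; simpl; auto.
  intros a Ha; apply Hp; simpl; auto.
Qed.

Lemma abs_conc (Z : pT Y') c d : fresh (pT Y') c Z -> fresh (pT Y') d Z ->
  abs (pT Y) c (conc Y Y' j Z c) = abs (pT Y) d (conc Y Y' j Z d).
Proof.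
  intros Fc Fd. destruct (Nat.eq_dec c d) as [<-|ne]; auto.
  destruct (fresh_ex _ _ _ Fd) as [K [HK NK]].
  rewrite (abs_rename (pT Y) (is_action_T Y HY) _ c d).
  - rewrite conc_act, (fresh_swap _ (is_action_T Y' HY') Z c d) by auto.
    simpl; now rewrite swapf_l.
  - apply (fresh_of _ (c :: K)); [apply conc_supports; auto|].
    intros [E|E]; auto.
Qed.

End Concretion.

Lemma F_abs_equivariant Y : equivariant (pAbs Y) (pF Y) (F_abs Y).
Proof. intros p P; reflexivity. Qed.

Lemma id_equivariant Y : equivariant Y Y (fun y => y).
Proof. intros p y; reflexivity. Qed.

Lemma supports_F_abs Y K (P : pAbs Y) : supports (pF Y) K (F_abs Y P) <-> supports (pAbs Y) K P.
Proof.
  unfold F_abs. split; intros S p Hp; specialize (S p Hp).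
  - injection S; auto.
  - cbn -[pAbs]. now rewrite S.
Qed.

Lemma choose_fresh_spec Y (x : Y) : fs Y x -> fresh Y (choose_fresh Y x) x.
Proof.
  intros [K HK]. unfold choose_fresh. apply epsilon_spec.
  destruct (notin_ex K) as [c Hc]. exists c. apply (fresh_of _ K); auto.
Qed.

Lemma pbool_true (P : Prop) : pbool P = true <-> P.
Proof. unfold pbool. destruct (excluded_middle_informative P); split; auto; discriminate. Qed.

Lemma eps_fresh X (HX : is_action X) (S : pT (pF X)) d : fresh (pT (pF X)) d S ->
  eps X S = ((pbool (S (inl tt)), fun b s => S (inr (inl (b, s)))),
             abs (pT X) d (conc X (pF X) (F_abs X) S d)).
Proof.
  intros Fd. unfold eps. f_equal.
  apply (abs_conc X (pF X) HX (is_action_F X HX) _ (F_abs_equivariant X)); auto.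
  apply choose_fresh_spec, (fresh_fs _ _ _ Fd).
Qed.

Lemma eps_abs_supports X (HX : is_action X) (A : pT (pF X)) L :
  supports (pT (pF X)) L A -> supports (pAbs (pT X)) L (snd (eps X A)).
Proof.
  intros SA. destruct (notin_ex L) as [d Nd].
  rewrite (eps_fresh X HX A d (fresh_of _ _ _ _ SA Nd)).
  apply (abs_supports _ (is_action_T X HX)), conc_supports; auto using F_abs_equivariant.
Qed.

Lemma rho_fresh X (HX : is_action X) (S : pT (pG X)) d :
  fresh (pT (pAbs X)) d (Tmap (pG X) (pAbs X) snd S) ->
  rho X S = ((pbool (exists g, S g /\ fst (fst g) = true),
              fun b y => exists g, S g /\ y = snd (fst g) b),
             abs (pT X) d (conc X (pAbs X) (fun P => P) (Tmap (pG X) (pAbs X) snd S) d)).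
Proof.
  intros Fd. unfold rho. f_equal.
  apply (abs_conc X (pAbs X) HX (is_action_Abs X HX) _ (id_equivariant _)
           (Tmap (pG X) (pAbs X) snd S)); auto.
  apply choose_fresh_spec, (fresh_fs _ _ _ Fd).
Qed.

(** For [d <> a], [B := (a d)·A] works: [d] is fresh for [A] and for [s']. *)
Lemma abs_mem_fresh Y (HY : is_action Y) (A : pT Y) a s s' d L :
  ufs Y A -> supports (pAbs (pT Y)) L (abs (pT Y) a A) -> ~ In d L ->
  A s' -> abs Y d s = abs Y a s' ->
  exists B, abs (pT Y) a A = abs (pT Y) d B /\ B s.
Proof.
  intros U SA Nd As' E. assert (HT := is_action_T Y HY).
  apply abs_supports_inv in SA; [|auto|apply ufs_fs; auto].
  assert (Ss' : supports Y (a :: L) s') by (apply (elem_supports Y HY A); auto).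
  destruct (Nat.eq_dec d a) as [->|nd].
  - exists A. split; auto. apply abs_inj in E; [congruence|auto|exists (a :: L); auto].
  - assert (Fd : forall (Z : pset) (x : Z), supports Z (a :: L) x -> fresh Z d x)
      by (intros; apply (fresh_of _ (a :: L)); [auto|intros [?|?]; auto]).
    rewrite (abs_rename Y HY s' a d (Fd _ _ Ss')) in E.
    apply abs_inj in E; [|auto|apply fs_act; auto; exists (a :: L); auto].
    exists (pact (pT Y) (swap a d) A). split.
    + apply abs_rename; auto.
    + simpl. rewrite pinverse_swap, E, act_swap2; auto.
Qed.

Lemma lam_supports X (HX : is_action X) (u : pF (pT X)) L z :
  inF (pT X) (inT X (allX X)) u -> supports (pF (pT X)) L u -> lam X u z ->
  supports (pF X) L z.
Proof.
  intros Hu Su Hz. destruct u as [[]|[[b B]|P]]; simpl in Hz.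
  - subst z. intros p _. reflexivity.
  - destruct Hz as [x [Bx ->]].
    assert (SbB : forall p, (forall a, In a L -> pf p a = a) ->
                       pf p b = b /\ pact (pT X) p B = B)
      by (intros p Hp; specialize (Su p Hp); injection Su; auto).
    assert (Sx : supports X L x).
    { apply (elem_supports X HX B); [apply Hu| |auto]. intros p Hp; apply SbB; auto. }
    intros p Hp. simpl. now rewrite (proj1 (SbB p Hp)), Sx.
  - destruct Hz as [a [A [s [-> [As ->]]]]].
    apply supports_F_abs in Su. apply supports_F_abs, (abs_supports X HX).
    destruct Hu as [a0 [A0 [[U0 _] E0]]].
    assert (U : ufs X A) by (apply (abs_ufs X HX A A0 a a0); auto).
    apply (elem_supports X HX A); auto.
    apply (abs_supports_inv _ (is_action_T X HX)); auto. apply ufs_fs; auto.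
Qed.

Lemma union_lam_unit X (S : pT (pF (pT X))) :
  mu (pF X) (Tmap (pF (pT X)) (pT (pF X)) (lam X) S) (inl tt) <-> S (inl tt).
Proof.
  split.
  - intros [A [[u [Su ->]] Hz]]. destruct u as [[]|[[b B]|P]]; simpl in Hz; auto.
    + destruct Hz as [x [_ E]]; discriminate.
    + destruct Hz as [a [A [s [_ [_ E]]]]]; discriminate.
  - intro H. exists (lam X (inl tt)). split; [exists (inl tt); auto | reflexivity].
Qed.

Lemma union_lam_pair X (S : pT (pF (pT X))) b s :
  mu (pF X) (Tmap (pF (pT X)) (pT (pF X)) (lam X) S) (inr (inl (b, s))) <->
  mu X (fun B => S (inr (inl (b, B)))) s.
Proof.
  split.
  - intros [A [[u [Su ->]] Hz]]. destruct u as [[]|[[b' B]|P]]; simpl in Hz.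
    + discriminate.
    + destruct Hz as [x [Bx E]]. injection E as -> ->. exists B; auto.
    + destruct Hz as [a [A [s' [_ [_ E]]]]]; discriminate.
  - intros [B [SB Bs]]. exists (lam X (inr (inl (b, B)))).
    split; [exists (inr (inl (b, B))); auto | exists s; auto].
Qed.

Lemma union_lam_conc X (HX : is_action X) (S : pT (pF (pT X))) L d s :
  (forall u, S u -> inF (pT X) (inT X (allX X)) u) ->
  (forall u, S u -> supports (pF (pT X)) L u) -> ~ In d L ->
  conc X (pF X) (F_abs X) (mu (pF X) (Tmap (pF (pT X)) (pT (pF X)) (lam X) S)) d s <->
  mu X (conc (pT X) (pF (pT X)) (F_abs (pT X)) S d) s.
Proof.
  intros HS HL Nd. split.
  - intros [A' [[u [Su ->]] Hz]]. destruct u as [[]|[[b B]|P]]; simpl in Hz.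
    + discriminate.
    + destruct Hz as [x [_ E]]; discriminate.
    + destruct Hz as [a [A [s' [-> [As' E]]]]]. injection E as E.
      destruct (HS _ Su) as [a0 [A0 [[U0 _] E0]]].
      destruct (abs_mem_fresh X HX A a s s' d L) as [B [EB Bs]]; auto.
      * apply (abs_ufs X HX A A0 a a0); auto.
      * apply supports_F_abs, HL; auto.
      * exists B. split; auto. unfold conc, F_abs. now rewrite <- EB.
  - intros [A0 [SA0 A0s]]. exists (lam X (F_abs (pT X) (abs (pT X) d A0))).
    split; [exists (F_abs (pT X) (abs (pT X) d A0)); auto | exists d, A0, s; auto].
Qed.

Lemma eps_lam_law (X : nominal) (S : pT (pF (pT X))) :
  inT (pF (pT X)) (inF (pT X) (inT X (allX X))) S ->
  eps X (mu (pF X) (Tmap (pF (pT X)) (pT (pF X)) (lam X) S))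
  = Gmap (pT (pT X)) (pT X) (mu X) (eps (pT X) S).
Proof.
  intros [US HS].
  assert (HX := is_action_nom X). assert (HT := is_action_T _ HX).
  assert (HFT := is_action_F _ HT).
  destruct (ufs_supports _ HFT S US) as [L HL].
  destruct (notin_ex L) as [d Nd].
  assert (SS' : supports (pT (pF X)) L (mu (pF X) (Tmap _ _ (lam X) S))).
  { apply (supports_T _ (is_action_F X HX)). intros z [A [[u [Su ->]] Hz]].
    apply (lam_supports X HX u); auto. }
  assert (SS : supports (pT (pF (pT X))) L S) by (apply (supports_T _ HFT); auto).
  rewrite (eps_fresh X HX _ d (fresh_of _ _ _ _ SS' Nd)),
    (eps_fresh (pT X) HT S d (fresh_of _ _ _ _ SS Nd)).
  unfold Gmap; cbn [fst snd].
  rewrite (absmap_abs _ _ _ (mu_equivariant X HX) (is_action_T _ HT) HT)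
    by (exists (d :: L); apply conc_supports; auto using F_abs_equivariant).
  apply pair_equal_spec; split; [apply pair_equal_spec; split|f_equal].
  - f_equal. apply propositional_extensionality, union_lam_unit.
  - apply functional_extensionality; intro b. apply functional_extensionality; intro s.
    apply propositional_extensionality, union_lam_pair.
  - apply functional_extensionality; intro s.
    apply propositional_extensionality, (union_lam_conc X HX S L); auto.
Qed.

Lemma union_eps_unit X (S : pT (pT (pF X))) :
  mu (pF X) S (inl tt) <->
  exists g, Tmap (pT (pF X)) (pG (pT X)) (eps X) S g /\ fst (fst g) = true.
Proof.
  split.
  - intros [A [SA Ai]]. exists (eps X A). split; [exists A; auto|].
    apply pbool_true; auto.
  - intros [g [[A [SA ->]] H]]. exists A. split; [auto|apply pbool_true, H].
Qed.

Lemma union_eps_pair X (S : pT (pT (pF X))) b s :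
  mu (pF X) S (inr (inl (b, s))) <->
  mu X (fun y => exists g, Tmap (pT (pF X)) (pG (pT X)) (eps X) S g /\ y = snd (fst g) b) s.
Proof.
  split.
  - intros [A [SA H]]. exists (fun s => A (inr (inl (b, s)))).
    split; [exists (eps X A); split; [exists A|]|]; auto.
  - intros [B [[g [[A [SA ->]] ->]] H]]. exists A; auto.
Qed.

Lemma union_eps_conc X (HX : is_action X) (S : pT (pT (pF X))) L d s :
  (forall A, S A -> supports (pT (pF X)) L A) -> ~ In d L ->
  conc X (pF X) (F_abs X) (mu (pF X) S) d s <->
  mu X (conc (pT X) (pAbs (pT X)) (fun P => P)
          (Tmap (pG (pT X)) (pAbs (pT X)) snd (Tmap (pT (pF X)) (pG (pT X)) (eps X) S)) d) s.
Proof.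
  intros HL Nd.
  assert (Eps : forall A, S A -> snd (eps X A) = abs (pT X) d (conc X (pF X) (F_abs X) A d)).
  { intros A SA. rewrite (eps_fresh X HX A d); auto. apply (fresh_of _ L); auto. }
  split.
  - intros [A [SA H]]. exists (conc X (pF X) (F_abs X) A d). split; [|exact H].
    exists (eps X A). split; [exists A; auto|]. symmetry; auto.
  - intros [B [[g [[A [SA ->]] E]] Bs]]. rewrite Eps in E by auto.
    apply abs_inj in E; [subst B; exists A; auto|apply is_action_T; auto|].
    exists (d :: L). apply conc_supports; auto using F_abs_equivariant.
Qed.

Lemma eps_rho_law (X : nominal) (S : pT (pT (pF X))) :
  inT (pT (pF X)) (inT (pF X) (inF X (allX X))) S ->
  eps X (mu (pF X) S)
  = Gmap (pT (pT X)) (pT X) (mu X) (rho (pT X) (Tmap (pT (pF X)) (pG (pT X)) (eps X) S)).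
Proof.
  intros [US _].
  assert (HX := is_action_nom X). assert (HT := is_action_T _ HX).
  assert (HF := is_action_F _ HX). assert (HTF := is_action_T _ HF).
  destruct (ufs_supports _ HTF S US) as [L HL].
  destruct (notin_ex L) as [d Nd].
  assert (SmuS : supports (pT (pF X)) L (mu (pF X) S)).
  { apply (supports_equivariant _ _ _ (mu_equivariant _ HF)), (supports_T _ HTF); auto. }
  assert (Sabs : supports (pT (pAbs (pT X))) L
                   (Tmap (pG (pT X)) (pAbs (pT X)) snd (Tmap (pT (pF X)) (pG (pT X)) (eps X) S))).
  { apply (supports_T _ (is_action_Abs _ HT)).
    intros P [g [[A [SA ->]] ->]]. apply eps_abs_supports; auto. }
  rewrite (eps_fresh X HX _ d (fresh_of _ _ _ _ SmuS Nd)),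
    (rho_fresh (pT X) HT _ d (fresh_of _ _ _ _ Sabs Nd)).
  unfold Gmap; cbn [fst snd].
  rewrite (absmap_abs _ _ _ (mu_equivariant X HX) (is_action_T _ HT) HT)
    by (exists (d :: L); apply conc_supports; auto using id_equivariant).
  apply pair_equal_spec; split; [apply pair_equal_spec; split|f_equal].
  - f_equal. apply propositional_extensionality, union_eps_unit.
  - apply functional_extensionality; intro b. apply functional_extensionality; intro s.
    apply propositional_extensionality, union_eps_pair.
  - apply functional_extensionality; intro s.
    apply propositional_extensionality, (union_eps_conc X HX S L); auto.
Qed.

Theorem lemma4p20 (X : nominal) :
  (forall S : pT (pF (pT X)),
     inT (pF (pT X)) (inF (pT X) (inT X (allX X))) S ->
     eps X (mu (pF X) (Tmap (pF (pT X)) (pT (pF X)) (lam X) S))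
     = Gmap (pT (pT X)) (pT X) (mu X) (eps (pT X) S)) /\
  (forall S : pT (pT (pF X)),
     inT (pT (pF X)) (inT (pF X) (inF X (allX X))) S ->
     eps X (mu (pF X) S)
     = Gmap (pT (pT X)) (pT X) (mu X)
         (rho (pT X) (Tmap (pT (pF X)) (pG (pT X)) (eps X) S))).
Proof. split; [apply eps_lam_law | apply eps_rho_law]. Qed.
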